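(* In the bandit setting described in the context, let $\epsilon\le\mathcal{G}^2$. Then for any $a\in\mathcal{A}$ and all $t=1,\dots,n$, $$|\langle\hat w_t,\Phi_m(a)\rangle|\le\mathcal{G}^2\sup_{c,d\in\mathcal{A}}\left|\Phi_m(c)^\top\left(\mathbb{E}_{x\sim p_t}[\Phi_m(x)\Phi_m(x)^\top]\right)^{-1}\Phi_m(d)\right|.$$ Further, if the exploration parameter satisfies $\gamma>4\eta\mathcal{G}^4m$, then $\eta|\langle\hat w_t,\Phi_m(a)\rangle|\le1$ for all $a\in\mathcal{A}$.
   Context: $\mathcal{A}\subset\mathbb{R}^d$ is finite; $\mathcal{K}$ is a kernel with feature map $\Phi$, $\sup_{a\in\mathcal{A}}\mathcal{K}(a,a)\le\mathcal{G}^2$; the adversary plays $w_t=\Phi(y_t)$ with $|\mathcal{K}(a,y_t)|\le\mathcal{G}^2$ for $a\in\mathcal{A}$. $\Phi_m:\mathbb{R}^d\to\mathbb{R}^m$ has kernel $\hat{\mathcal{K}}_m(x,y)=\langle\Phi_m(x),\Phi_m(y)\rangle$ with $|\mathcal{K}(x,y)-\hat{\mathcal{K}}_m(x,y)|\le\epsilon$ for all $x,y\in\mathcal{A}$. The player plays $a_t\sim p_t=\gamma\nu_{\mathcal{J}}^{\mathcal{A}}+(1-\gamma)q_t$, with $q_t$ a distribution on $\mathcal{A}$, $\gamma\in(0,1]$, and $\nu_{\mathcal{J}}^{\mathcal{A}}$ a distribution on $\mathcal{A}$ whose image under $\Phi_m$ is John's distribution of $\mathrm{conv}(\Phi_m(\mathcal{A}))$,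 in coordinates where John's ellipsoid is the unit ball centered at the origin (so $\mathbb{E}_{\nu_{\mathcal{J}}^{\mathcal{A}}}[\Phi_m\Phi_m^\top]=I_m/m$). $\eta>0$ is the learning rate. The loss estimate is $\hat w_t=\mathcal{K}(a_t,y_t)\left(\mathbb{E}_{x\sim p_t}[\Phi_m(x)\Phi_m(x)^\top]\right)^{-1}\Phi_m(a_t)$. *)

From HB Require Import structures.
From mathcomp Require Import all_boot all_order all_algebra.
From mathcomp Require Import reals.
Set Implicit Arguments. Unset Strict Implicit. Unset Printing Implicit Defensive.
Import Order.TTheory GRing.Theory Num.Theory.
Local Open Scope ring_scope.

Definition dotv (R : realType) (k : nat) (u v : 'cV[R]_k) : R := (u^T *m v) 0 0.

Definition is_distr (R : realType) (T : finType) (p : T -> R) : Prop :=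
  (forall i, 0 <= p i) /\ \sum_i p i = 1.

(* Positive semi-definite (symmetric) kernel on R^d; by Moore-Aronszajn this is
   equivalent to the existence of a feature map Phi into a Hilbert space with
   K(x,y) = <Phi x, Phi y>. *)
Definition is_kernel (R : realType) (d : nat) (K : 'cV[R]_d -> 'cV[R]_d -> R) : Prop :=
  (forall x y, K x y = K y x) /\
  (forall (k : nat) (x : 'I_k -> 'cV[R]_d) (c : 'I_k -> R),
      0 <= \sum_i \sum_j c i * c j * K (x i) (x j)).

(* E_{x ~ p}[Phi_m(x) Phi_m(x)^T] for p a distribution on A = {pt i}. *)
Definition cov_mx (R : realType) (T : finType) (d m : nat)
  (pt : T -> 'cV[R]_d) (Phim : 'cV[R]_d -> 'cV[R]_m) (p : T -> R) : 'M[R]_m :=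
  \sum_i p i *: (Phim (pt i) *m (Phim (pt i))^T).

(* John's distribution of conv(Phi_m(A)), in coordinates where John's
   ellipsoid is the unit ball centred at the origin (John's theorem and its
   converse):  the unit ball lies in conv(Phi_m(A)); nu is supported on
   contact points u (|u| = 1 and the tangent hyperplane at u supports
   conv(Phi_m(A))); and  E_nu[Phi_m] = 0,  E_nu[Phi_m Phi_m^T] = I_m / m. *)
Definition is_John_distr (R : realType) (T : finType) (d m : nat)
  (pt : T -> 'cV[R]_d) (Phim : 'cV[R]_d -> 'cV[R]_m) (nu : T -> R) : Prop :=
  [/\ is_distr nu,
      (forall u : 'cV[R]_m, dotv u u <= 1 ->
         exists lam : T -> R, is_distr lam /\ u = \sum_i lam i *: Phim (pt i)),
      (forall i, 0 < nu i ->
         dotv (Phim (pt i)) (Phim (pt i)) = 1 /\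
         forall j, dotv (Phim (pt j)) (Phim (pt i)) <= 1),
      \sum_i nu i *: Phim (pt i) = 0
    & cov_mx pt Phim nu = (m%:R)^-1 *: 1%:M].

Definition mix_distr (R : realType) (T : finType) (gamma : R) (nu q : T -> R) : T -> R :=
  fun i => gamma * nu i + (1 - gamma) * q i.

Definition west (R : realType) (T : finType) (d m : nat)
  (pt : T -> 'cV[R]_d) (Phim : 'cV[R]_d -> 'cV[R]_m)
  (K : 'cV[R]_d -> 'cV[R]_d -> R) (p : T -> R) (at_ : T) (yt : 'cV[R]_d)
  : 'cV[R]_m :=
  K (pt at_) yt *: (invmx (cov_mx pt Phim p) *m Phim (pt at_)).

From HB Require Import structures.
From mathcomp Require Import all_boot all_order all_algebra.
From mathcomp Require Import reals ring lra.
Import Order.TTheory GRing.Theory Num.Theory.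
Local Open Scope ring_scope.

(* The estimate factors as K(a_t, y_t) Phi_m(c)^T Sigma^-1 Phi_m(a_t), with
   Sigma = E_{p_t}[Phi_m Phi_m^T], which gives the first bound at once.  For
   the second, John's distribution makes Sigma = (gamma/m) I + P with P
   positive semi-definite; for such a matrix M = c I + P, Cauchy-Schwarz in the
   inner product of M together with M^2 >= c M gives
   2 c |u^T M^-1 v| <= |u|^2 + |v|^2.  Since |Phi_m(e)|^2 <= K(e,e) + eps
   <= 2 G^2, the bilinear form is at most 2 G^2 m / gamma, and
   gamma > 4 eta G^4 m makes eta |<hat w_t, Phi_m(a)>| at most 1/2. *)

Section DotProduct.
Context {R : realType} {k : nat}.
Implicit Types (u v w z : 'cV[R]_k) (A : 'M[R]_k).

Lemma dotvC u v : dotv u v = dotv v u.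
Proof. by rewrite /dotv -[in LHS](trmxK (u^T *m v)) trmx_mul trmxK mxE. Qed.

Lemma dotvDr u v w : dotv u (v + w) = dotv u v + dotv u w.
Proof. by rewrite /dotv mulmxDr mxE. Qed.

Lemma dotvZr u v a : dotv u (a *: v) = a * dotv u v.
Proof. by rewrite /dotv -scalemxAr mxE. Qed.

Lemma dotv0 u : dotv u 0 = 0.
Proof. by rewrite /dotv mulmx0 mxE. Qed.

Lemma dotvDl u v w : dotv (v + w) u = dotv v u + dotv w u.
Proof. by rewrite dotvC dotvDr !(dotvC u). Qed.

Lemma dotvZl u v a : dotv (a *: v) u = a * dotv v u.
Proof. by rewrite dotvC dotvZr dotvC. Qed.

Lemma dotv_mulmxr u A v : dotv u (A *m v) = dotv (A^T *m u) v.
Proof. by rewrite /dotv trmx_mul trmxK mulmxA. Qed.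

Lemma dotv_sumr I (r : seq I) (P : pred I) (F : I -> 'cV[R]_k) u :
  dotv u (\sum_(i <- r | P i) F i) = \sum_(i <- r | P i) dotv u (F i).
Proof. by rewrite /dotv mulmx_sumr summxE. Qed.

Lemma dotvE u v : dotv u v = \sum_i u i 0 * v i 0.
Proof. by rewrite /dotv mxE; apply: eq_bigr => i _; rewrite mxE. Qed.

Lemma dotvv_ge0 u : 0 <= dotv u u.
Proof. by rewrite dotvE; apply: sumr_ge0 => i _; rewrite -expr2 sqr_ge0. Qed.

Lemma dotvv_eq0 u : dotv u u = 0 -> u = 0.
Proof.
rewrite dotvE => /psumr_eq0P u2_eq0; apply/matrixP => i j.
rewrite (ord1 j) mxE; apply/eqP; rewrite -sqrf_eq0 expr2 u2_eq0 //.
by move=> l _; rewrite -expr2 sqr_ge0.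
Qed.

Lemma dotv_dim0 u v : k = 0%N -> dotv u v = 0.
Proof. by move=> k0; rewrite dotvE big1 // => i; have := ltn_ord i; rewrite [X in (_ < X)%N]k0. Qed.

End DotProduct.

Definition is_psd {R : realType} {k : nat} (P : 'M[R]_k) : Prop :=
  P^T = P /\ forall z, 0 <= dotv z (P *m z).

Section PositiveSemiDefinite.
Context {R : realType} {k : nat}.
Implicit Types (u v w z : 'cV[R]_k) (P : 'M[R]_k).

Lemma is_psdZ a P : 0 <= a -> is_psd P -> is_psd (a *: P).
Proof.
move=> a_ge0 [PT P_ge0]; split; first by rewrite linearZ /= PT.
by move=> z; rewrite -scalemxAl dotvZr mulr_ge0.
Qed.

Lemma psd_dotv_sym P z w : is_psd P -> dotv w (P *m z) = dotv z (P *m w).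
Proof. by case=> PT _; rewrite dotv_mulmxr PT dotvC. Qed.

Lemma psd_norm_dotv_le P z w : is_psd P ->
  2 * `|dotv z (P *m w)| <= dotv z (P *m z) + dotv w (P *m w).
Proof.
move=> P_psd; have [_ P_ge0] := P_psd.
have expand s : dotv (z + s *: w) (P *m (z + s *: w)) =
    dotv z (P *m z) + 2 * s * dotv z (P *m w) + s ^+ 2 * dotv w (P *m w).
  rewrite mulmxDr -scalemxAr !dotvDl !dotvDr !dotvZl !dotvZr.
  rewrite (psd_dotv_sym P z w P_psd); ring.
have := P_ge0 (z + 1 *: w); have := P_ge0 (z + (-1) *: w).
rewrite !expand; case: (lerP 0 (dotv z (P *m w))) => [/ger0_norm|/ltr0_norm] ->; lra.
Qed.

Context {c : R} {P : 'M[R]_k}.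
Hypotheses (c_gt0 : 0 < c) (P_psd : is_psd P).
Let M := c *: 1%:M + P.

Let mulM z : M *m z = c *: z + P *m z.
Proof. by rewrite mulmxDl -scalemxAl mul1mx. Qed.

Lemma psd_shift_dotv_ge z : c * dotv z z <= dotv z (M *m z).
Proof. by rewrite mulM dotvDr dotvZr lerDl; case: P_psd. Qed.

Lemma psd_shift_psd : is_psd M.
Proof.
split; first by rewrite linearD /= linearZ /= trmx1; case: P_psd => ->.
move=> z; apply: le_trans (psd_shift_dotv_ge z).
exact: mulr_ge0 (ltW c_gt0) (dotvv_ge0 z).
Qed.

Lemma psd_shift_unitmx : M \in unitmx.
Proof.
have [MT _] := psd_shift_psd.
rewrite -row_free_unit; apply: inj_row_free => r rM0.
have Mr0 : M *m r^T = 0 by rewrite -MT -trmx_mul rM0 trmx0.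
have r2_le0 : c * dotv r^T r^T <= 0.
  by have := psd_shift_dotv_ge r^T; rewrite Mr0 dotv0.
have r2_eq0 : dotv r^T r^T = 0.
  by apply/eqP; rewrite eq_le dotvv_ge0 andbT -(pmulr_rle0 _ c_gt0).
by rewrite -[r]trmxK (dotvv_eq0 _ r2_eq0) trmx0.
Qed.

(* M^2 - c M = c P + P^2 is positive semi-definite. *)
Lemma psd_shift_sqr_ge z : c * dotv z (M *m z) <= dotv (M *m z) (M *m z).
Proof.
have [_ P_ge0] := P_psd.
have PzP : 0 <= dotv (P *m z) (P *m z) := dotvv_ge0 _.
rewrite [in X in _ <= X]mulM mulM !dotvDl !dotvDr !dotvZl !dotvZr.
rewrite (dotvC (P *m z) z); have := mulr_ge0 (ltW c_gt0) (P_ge0 z); lra.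
Qed.

Lemma psd_shift_invmx_le u v :
  2 * c * `|dotv u (invmx M *m v)| <= dotv u u + dotv v v.
Proof.
set z := invmx M *m u; set w := invmx M *m v.
have Mz : M *m z = u by rewrite mulKVmx ?psd_shift_unitmx.
have Mw : M *m w = v by rewrite mulKVmx ?psd_shift_unitmx.
have -> : dotv u w = dotv z (M *m w).
  by rewrite -Mz dotv_mulmxr; case: psd_shift_psd => ->.
have zw_le := psd_norm_dotv_le M z w psd_shift_psd.
have zz_le := psd_shift_sqr_ge z; rewrite [in X in _ <= X]Mz in zz_le.
have ww_le := psd_shift_sqr_ge w; rewrite [in X in _ <= X]Mw in ww_le.
by have := ler_wpM2l (ltW c_gt0) zw_le; lra.
Qed.

End PositiveSemiDefinite.

Section Covariance.
Context {R : realType} {T : finType} {d m : nat}.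
Variables (pt : T -> 'cV[R]_d) (Phim : 'cV[R]_d -> 'cV[R]_m).

Lemma cov_mx_psd (p : T -> R) : (forall i, 0 <= p i) -> is_psd (cov_mx pt Phim p).
Proof.
move=> p_ge0; split.
  rewrite /cov_mx linear_sum; apply: eq_bigr => i _.
  by rewrite linearZ /= trmx_mul trmxK.
move=> z; rewrite /cov_mx mulmx_suml dotv_sumr; apply: sumr_ge0 => i _.
rewrite -scalemxAl dotvZr -mulmxA [_^T *m z]mx11_scalar mul_mx_scalar dotvZr.
by rewrite -/(dotv (Phim (pt i)) z) dotvC mulr_ge0 // -expr2 sqr_ge0.
Qed.

Lemma cov_mx_mix (gamma : R) (nu q : T -> R) :
  cov_mx pt Phim (mix_distr gamma nu q) =
  gamma *: cov_mx pt Phim nu + (1 - gamma) *: cov_mx pt Phim q.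
Proof.
rewrite /cov_mx !scaler_sumr -big_split /=.
by apply: eq_bigr => i _; rewrite /mix_distr scalerDl !scalerA.
Qed.

Lemma mix_cov_invmx_le {gamma : R} {nu q : T -> R} :
  (0 < m)%N -> 0 < gamma <= 1 -> (forall i, 0 <= q i) ->
  cov_mx pt Phim nu = m%:R^-1 *: 1%:M -> forall u v : 'cV[R]_m,
  2 * (gamma / m%:R) *
    `|dotv u (invmx (cov_mx pt Phim (mix_distr gamma nu q)) *m v)|
  <= dotv u u + dotv v v.
Proof.
move=> m_gt0 /andP[gamma_gt0 gamma_le1] q_ge0 cov_nu u v.
have c_gt0 : 0 < gamma / m%:R by rewrite divr_gt0 // ltr0n.
have Pq_psd : is_psd ((1 - gamma) *: cov_mx pt Phim q).
  by apply: is_psdZ; [rewrite subr_ge0 | exact: cov_mx_psd].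
by rewrite cov_mx_mix cov_nu scalerA; apply: psd_shift_invmx_le.
Qed.

End Covariance.

Theorem lemma7
  (R : realType) (d m n : nat)
  (T : finType) (pt : T -> 'cV[R]_d) (pt_inj : injective pt)
  (K : 'cV[R]_d -> 'cV[R]_d -> R) (G eps gamma eta : R)
  (Phim : 'cV[R]_d -> 'cV[R]_m)
  (nu : T -> R) (q : nat -> T -> R) (a : nat -> T) (y : nat -> 'cV[R]_d)
  (hK : is_kernel K)
  (hG : forall c, K (pt c) (pt c) <= G ^+ 2)
  (hy : forall t c, `|K (pt c) (y t)| <= G ^+ 2)
  (happrox : forall c e, `|K (pt c) (pt e) - dotv (Phim (pt c)) (Phim (pt e))| <= eps)
  (hnu : is_John_distr pt Phim nu)
  (hq : forall t, is_distr (q t))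
  (hgamma : 0 < gamma <= 1) (heta : 0 < eta)
  (heps : eps <= G ^+ 2) :
  forall t, (1 <= t <= n)%N ->
  let p := mix_distr gamma nu (q t) in
  let wt := west pt Phim K p (a t) (y t) in
  (forall c : T,
     `|dotv wt (Phim (pt c))|
       <= G ^+ 2 * \big[Num.max/0]_(c' : T) \big[Num.max/0]_(e : T)
              `|dotv (Phim (pt c')) (invmx (cov_mx pt Phim p) *m Phim (pt e))|)
  /\
  (gamma > 4%:R * eta * G ^+ 4 * m%:R ->
     forall c : T, eta * `|dotv wt (Phim (pt c))| <= 1).
Proof.
move=> t _ p wt; set B := invmx (cov_mx pt Phim p).
have wtE c : dotv wt (Phim (pt c)) =
    K (pt (a t)) (y t) * dotv (Phim (pt c)) (B *m Phim (pt (a t))).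
  by rewrite dotvZl dotvC.
split=> [c | gamma_gt c].
  rewrite wtE normrM ler_pM ?normr_ge0 //.
  by apply: le_trans (le_bigmax _ _ c); apply: le_bigmax.
have [m0 | m_gt0] := posnP m; first by rewrite wtE dotv_dim0 // mulr0 normr0 mulr0.
have [_ _ _ _ cov_nu] := hnu; have [q_ge0 _] := hq t.
have := mix_cov_invmx_le pt Phim m_gt0 hgamma q_ge0 cov_nu (Phim (pt c)) (Phim (pt (a t))).
have feature_le e : dotv (Phim (pt e)) (Phim (pt e)) <= 2 * G ^+ 2.
  by have := happrox e e; rewrite ler_norml => /andP[+ _]; have := hG e; lra.
have := feature_le c; have := feature_le (a t); have := hy t (a t).
rewrite -/p -/B wtE normrM; set c0 := gamma / m%:R.
set kt := `|K _ _|; set x := `|dotv _ _|.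
have [kt_ge0 x_ge0] : 0 <= kt /\ 0 <= x by split; apply: normr_ge0.
move=> kt_le u_le v_le x_le.
have c0_gt : 4 * eta * G ^+ 2 * G ^+ 2 < c0.
  by rewrite ltr_pdivlMr ?ltr0n // -mulrA -exprD.
have c0_gt0 : 0 < c0 by case/andP: hgamma => ? _; rewrite divr_gt0 // ltr0n.
have cx_le : c0 * x <= 2 * G ^+ 2 by lra.
have kcx_le : eta * (kt * (c0 * x)) <= eta * (G ^+ 2 * (2 * G ^+ 2)).
  by rewrite ler_pM2l // ler_pM // mulr_ge0 // ltW.
nra.
Qed.
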